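(* Let $\mathcal{G}=(G,<,+,0,\ldots)$ be an o-minimal expansion of an ordered abelian group, let $M\subseteq G^m$ be a definable set that is not bounded and let $N\subseteq G^n$ be a bounded definable set. If there is a definable bijection between $M$ and $N$, then there exist a bounded definable set $D\subseteq G$ and a definable bijection $(0,+\infty)\to D$.
   Context: A definable set $M\subseteq G^n$ is bounded if $M\subseteq[b,b']^n$ for some $b,b'\in G$, where $[b,b']=\{t\in G\mid b\le t\le b'\}$; here $(0,+\infty)=\{t\in G\mid t>0\}$. *)

From HB Require Import structures.
From mathcomp Require Import all_boot all_order all_algebra.
From mathcomp Require Import boolp classical_sets.
Set Implicit Arguments. Unset Strict Implicit. Unset Printing Implicit Defensive.
Import GRing.Theory.
Local Open Scope ring_scope.
Local Open Scope classical_set_scope.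

Notation pt G n := ('I_n -> G).

Record oag_order (G : zmodType) (le : G -> G -> Prop) : Prop := {
  oag_refl : forall x, le x x;
  oag_antisym : forall x y, le x y -> le y x -> x = y;
  oag_trans : forall x y z, le x y -> le y z -> le x z;
  oag_total : forall x y, le x y \/ le y x;
  oag_add : forall x y z, le x y -> le (x + z) (y + z) }.

Definition ltG (G : zmodType) (le : G -> G -> Prop) (x y : G) : Prop :=
  le x y /\ x <> y.

Definition vcons (G : Type) (n : nat) (a : G) (x : pt G n) : pt G n.+1 :=
  fun i => match unlift ord0 i with None => a | Some j => x j end.
Definition vsnoc (G : Type) (n : nat) (x : pt G n) (a : G) : pt G n.+1 :=
  fun i => match unlift ord_max i with None => a | Some j => x j end.
Definition vcat (G : Type) (m n : nat) (x : pt G m) (y : pt G n) : pt G (m + n) :=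
  fun i => match split i with inl j => x j | inr k => y k end.

Definition pt1 (G : Type) (a : G) : pt G 1 := fun _ => a.
Definition pt2 (G : Type) (a b : G) : pt G 2 := vcons a (pt1 b).
Definition pt3 (G : Type) (a b c : G) : pt G 3 := vcons a (pt2 b c).

Definition open_interval (G : zmodType) (le : G -> G -> Prop) (a b : G) : set (pt G 1) :=
  [set x | ltG le a (x ord0) /\ ltG le (x ord0) b].
Definition open_ray_right (G : zmodType) (le : G -> G -> Prop) (a : G) : set (pt G 1) :=
  [set x | ltG le a (x ord0)].
Definition open_ray_left (G : zmodType) (le : G -> G -> Prop) (b : G) : set (pt G 1) :=
  [set x | ltG le (x ord0) b].

(* An o-minimal expansion of the ordered abelian group (G, le, +, 0):
   a structure in the sense of van den Dries (definable sets with parameters),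
   containing the order, the graph of addition and all points, whose
   definable subsets of G are finite unions of points and open intervals
   (intervals possibly unbounded). *)
Record ominimal_expansion (G : zmodType) (le : G -> G -> Prop) := {
  definable : forall n : nat, set (pt G n) -> Prop;
  def_setT : forall n, definable (@setT (pt G n));
  def_setC : forall n (A : set (pt G n)), definable A -> definable (~` A);
  def_setU : forall n (A B : set (pt G n)), definable A -> definable B ->
     definable (A `|` B);
  def_prodl : forall n (A : set (pt G n)), definable A ->
     definable [set x : pt G n.+1 | exists a y, x = vcons a y /\ A y];
  def_prodr : forall n (A : set (pt G n)), definable A ->
     definable [set x : pt G n.+1 | exists y a, x = vsnoc y a /\ A y];
  def_diag : forall n, definable [set x : pt G n.+2 | x ord0 = x ord_max];
  def_proj : forall n (A : set (pt G n.+1)), definable A ->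
     definable [set y : pt G n | exists a, A (vsnoc y a)];
  def_point : forall a : G, definable [set pt1 a];
  def_lt : definable [set x : pt G 2 | exists a b, x = pt2 a b /\ ltG le a b];
  def_add : definable [set x : pt G 3 | exists a b, x = pt3 a b (a + b)];
  ominimal : forall A : set (pt G 1), definable A ->
     exists (ps : seq G) (ivs : seq (option G * option G)),
       A = [set x | (x ord0 \in ps) \/
              exists2 iv, iv \in ivs &
                match iv with
                | (Some a, Some b) => open_interval le a b x
                | (Some a, None) => open_ray_right le a x
                | (None, Some b) => open_ray_left le b x
                | (None, None) => True
                end] }.

Definition bounded_set (G : zmodType) (le : G -> G -> Prop) (n : nat)
  (M : set (pt G n)) : Prop :=
  exists b b' : G, forall x, M x -> forall i, le b (x i) /\ le (x i) b'.

Definition graph_on (G : Type) (m n : nat) (M : set (pt G m))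
  (f : pt G m -> pt G n) : set (pt G (m + n)) :=
  [set z | exists2 x, M x & z = vcat x (f x)].

Definition definable_bijection (G : zmodType) (le : G -> G -> Prop)
  (S : ominimal_expansion le) (m n : nat) (M : set (pt G m)) (N : set (pt G n))
  (f : pt G m -> pt G n) : Prop :=
  definable S (graph_on M f) /\ {in M &, injective f} /\ f @` M = N.

From HB Require Import structures.
From mathcomp Require Import all_boot all_order all_algebra.
From mathcomp Require Import boolp classical_sets.
From mathcomp Require Import zify.
Set Implicit Arguments. Unset Strict Implicit. Unset Printing Implicit Defensive.
Import GRing.Theory.
Local Open Scope ring_scope.
Local Open Scope classical_set_scope.

(** Since M is unbounded and N bounded, some signed coordinate t = ±x_i is unbounded
    above on M, and transporting it along the bijection gives a definable relation R(y, t)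
    on N x G, functional in y, whose values t are unbounded above. Induct on the dimension
    of N. If the fibre over some first coordinate y_1 is still unbounded, fix y_1 and
    recurse. Otherwise replace every fibre by its supremum: this gives a definable map from
    a bounded subset of G whose image is unbounded above, hence contains a ray (c, +oo)
    by o-minimality. For t > c let h(t) be the infimum of the preimage of t. By o-minimality,
    either h(t) eventually belongs to that preimage, or the preimage eventually contains an
    interval (h(t), u); as preimages of distinct points are disjoint, h is injective on a
    ray in both cases, and x |-> h(x + c) maps (0, +oo) bijectively onto a bounded
    definable set. *)

Section Vectors.
Variable T : Type.

Lemma vcons0 n a (x : pt T n) : vcons a x ord0 = a.
Proof. by rewrite /vcons unlift_none. Qed.

Lemma vcons_lift n a (x : pt T n) i : vcons a x (lift ord0 i) = x i.
Proof. by rewrite /vcons liftK. Qed.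

Lemma vcons_max n a (x : pt T n.+1) : vcons a x ord_max = x ord_max.
Proof. by rewrite (_ : ord_max = lift ord0 ord_max) ?vcons_lift //; apply: val_inj. Qed.

Lemma vcons_eta n (x : pt T n.+1) : x = vcons (x ord0) (fun i => x (lift ord0 i)).
Proof. by apply: funext => i; rewrite /vcons; case: unliftP => [j ->|->]. Qed.

Lemma vcons_belast n a (x : pt T n.+1) :
  (fun j => vcons a x (lift ord_max j)) = vcons a (fun j => x (lift ord_max j)).
Proof.
apply: funext => j; case: (unliftP ord0 j) => [k ->|->]; last first.
  by rewrite (_ : lift ord_max ord0 = ord0) ?vcons0 //; apply: val_inj.
rewrite vcons_lift (_ : lift ord_max (lift ord0 k) = lift ord0 (lift ord_max k)) ?vcons_lift //.
by apply: ord_inj; rewrite lift_max !lift0 lift_max.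
Qed.

Lemma vsnoc_max n a (x : pt T n) : vsnoc x a ord_max = a.
Proof. by rewrite /vsnoc unlift_none. Qed.

Lemma vsnoc_lift n a (x : pt T n) i : vsnoc x a (lift ord_max i) = x i.
Proof. by rewrite /vsnoc liftK. Qed.

Lemma vsnoc_eta n (x : pt T n.+1) : x = vsnoc (fun i => x (lift ord_max i)) (x ord_max).
Proof. by apply: funext => i; rewrite /vsnoc; case: unliftP => [j ->|->]. Qed.

Lemma vsnoc_nth n (x : pt T n) a (i : 'I_n.+1) (j : 'I_n) :
  (i : nat) = j -> vsnoc x a i = x j.
Proof.
move=> eij; rewrite (_ : i = lift ord_max j) ?vsnoc_lift //.
by apply: val_inj; rewrite /= /bump leqNgt ltn_ord.
Qed.

Lemma vsnoc_nth_max n (x : pt T n) a (i : 'I_n.+1) : (i : nat) = n -> vsnoc x a i = a.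
Proof. by move=> ein; rewrite (_ : i = ord_max) ?vsnoc_max //; apply: val_inj. Qed.

Lemma vcat_lshift m n (x : pt T m) (y : pt T n) i : vcat x y (lshift n i) = x i.
Proof. by rewrite /vcat (unsplitK (inl i)). Qed.

Lemma vcat_rshift m n (x : pt T m) (y : pt T n) i : vcat x y (rshift m i) = y i.
Proof. by rewrite /vcat (unsplitK (inr i)). Qed.

Lemma vcat_nth_l m n (x : pt T m) (y : pt T n) (i : 'I_(m + n)) (j : 'I_m) :
  (i : nat) = j -> vcat x y i = x j.
Proof. by move=> eij; rewrite (_ : i = lshift n j) ?vcat_lshift //; apply: val_inj. Qed.

Lemma vcat_nth_r m n (x : pt T m) (y : pt T n) (i : 'I_(m + n)) (j : 'I_n) :
  (i : nat) = (m + j)%N -> vcat x y i = y j.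
Proof. by move=> eij; rewrite (_ : i = rshift m j) ?vcat_rshift //; apply: val_inj. Qed.

Lemma vcat_inj m n (x x' : pt T m) (y y' : pt T n) :
  vcat x y = vcat x' y' -> x = x' /\ y = y'.
Proof.
move=> E; split; apply: funext => j.
  by have := congr1 (fun z => z (lshift n j)) E; rewrite /= !vcat_lshift.
by have := congr1 (fun z => z (rshift m j)) E; rewrite /= !vcat_rshift.
Qed.

Lemma pt1_eta (x : pt T 1) : x = pt1 (x ord0).
Proof. by apply: funext => i; rewrite ord1. Qed.

Lemma pt2_ord0 (a b : T) : pt2 a b ord0 = a.
Proof. exact: vcons0. Qed.

Lemma pt2_ord_max (a b : T) : pt2 a b ord_max = b.
Proof. by rewrite /pt2 (_ : ord_max = lift ord0 ord0 :> 'I_2) ?vcons_lift //; apply: val_inj. Qed.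

Lemma pt2_eta (x : pt T 2) : x = pt2 (x ord0) (x ord_max).
Proof.
rewrite {1}(vcons_eta x) /pt2; congr vcons; apply: funext => i.
by rewrite ord1 /pt1; congr x; apply: val_inj.
Qed.

End Vectors.

Arguments vsnoc_nth {T n x a i} j _.
Arguments vcat_nth_l {T m n x y i} j _.
Arguments vcat_nth_r {T m n x y i} j _.

Lemma vcat_pt1 (T : Type) (a b : T) : vcat (pt1 a) (pt1 b) = pt2 a b.
Proof.
apply: funext => i; rewrite /pt2; case: (unliftP ord0 i) => [j ->|->].
  by rewrite vcons_lift (vcat_nth_r j).
by rewrite vcons0 (vcat_nth_l ord0).
Qed.

Section DefinablePredicates.
Variables (G : zmodType) (le : G -> G -> Prop) (S : ominimal_expansion le).

Definition defp n (P : pt G n -> Prop) := definable S [set x | P x].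

Lemma defp_ext n (P Q : pt G n -> Prop) : (forall x, P x <-> Q x) -> defp P -> defp Q.
Proof.
move=> PQ; rewrite /defp (_ : [set x | Q x] = [set x | P x]) //.
by apply/seteqP; split=> x /= /PQ.
Qed.

Lemma defpT n : defp (fun _ : pt G n => True).
Proof. exact: def_setT. Qed.

Lemma defpN n (P : pt G n -> Prop) : defp P -> defp (fun x => ~ P x).
Proof. exact: def_setC. Qed.

Lemma defpU n (P Q : pt G n -> Prop) : defp P -> defp Q -> defp (fun x => P x \/ Q x).
Proof. exact: def_setU. Qed.

Lemma defpI n (P Q : pt G n -> Prop) : defp P -> defp Q -> defp (fun x => P x /\ Q x).
Proof.
move=> dP dQ; apply: defp_ext (defpN (defpU (defpN dP) (defpN dQ))) => x.
split; last by move=> [? ?] [].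
by move=> nPQ; split; apply: contrapT => ?; apply: nPQ; [left|right].
Qed.

Lemma defp_imp n (P Q : pt G n -> Prop) : defp P -> defp Q -> defp (fun x => P x -> Q x).
Proof.
move=> dP dQ; apply: defp_ext (defpU (defpN dP) dQ) => x; split; first by case.
by move=> PQ; case: (pselect (P x)) => Px; [right; apply: PQ | left].
Qed.

Lemma defp_exists_last n (P : pt G n.+1 -> Prop) :
  defp P -> defp (fun y : pt G n => exists a, P (vsnoc y a)).
Proof. by move=> dP; apply: defp_ext (def_proj dP). Qed.

Lemma defp_behead n (P : pt G n -> Prop) :
  defp P -> defp (fun x : pt G n.+1 => P (fun i => x (lift ord0 i))).
Proof.
move=> dP; apply: defp_ext (def_prodl dP) => x /=; split.
  by move=> [a [y [-> Py]]]; under eq_fun do rewrite vcons_lift.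
by move=> Px; exists (x ord0), (fun i => x (lift ord0 i)); rewrite -vcons_eta.
Qed.

Lemma defp_belast n (P : pt G n -> Prop) :
  defp P -> defp (fun x : pt G n.+1 => P (fun i => x (lift ord_max i))).
Proof.
move=> dP; apply: defp_ext (def_prodr dP) => x /=; split.
  by move=> [y [a [-> Py]]]; under eq_fun do rewrite vsnoc_lift.
by move=> Px; exists (fun i => x (lift ord_max i)), (x ord_max); rewrite -vsnoc_eta.
Qed.

Lemma defp_eq n (i j : 'I_n) : defp (fun x : pt G n => x i = x j).
Proof.
wlog lt_ij : i j / (i < j)%N.
  move=> ih; case: (ltngtP i j) => [/ih //|/ih|/val_inj ->]; last first.
    by apply: defp_ext (@defpT n) => x.
  by apply: defp_ext => x; split=> /esym.
elim: n i j lt_ij => [[]//|[|p] ih] i j lt_ij; first by rewrite !ord1 in lt_ij.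
case: (unliftP ord_max j) => [j' ->|->] in lt_ij *.
  rewrite lift_max in lt_ij.
  have lt_ip : (i < p.+1)%N by rewrite (ltn_trans lt_ij).
  have -> : i = lift ord_max (Ordinal lt_ip).
    by apply: val_inj; rewrite /= /bump leqNgt lt_ip.
  exact: (defp_belast (ih (Ordinal lt_ip) j' lt_ij)).
case: (unliftP ord0 i) => [i' ->|->] in lt_ij *; last exact: def_diag.
have -> : ord_max = lift ord0 (ord_max : 'I_p.+1) by apply: val_inj.
exact: (defp_behead (ih i' ord_max lt_ij)).
Qed.

Lemma defp_drop k n (P : pt G n -> Prop) :
  defp P -> defp (fun x : pt G (k + n) => P (fun i => x (rshift k i))).
Proof.
move=> dP; elim: k => [|k ih].
  apply: defp_ext dP => x.
  by have -> : (fun i => x (rshift 0 i)) = x by apply: funext => i; congr x; apply: val_inj.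
apply: defp_ext (defp_behead ih) => x.
have -> // : (fun i => x (lift ord0 (rshift k i))) = (fun i => x (rshift k.+1 i)).
by apply: funext => i; congr x; apply: val_inj.
Qed.

Lemma defp_cast n n' (e : n = n') (P : pt G n -> Prop) :
  defp P -> defp (fun x : pt G n' => P (fun i => x (cast_ord e i))).
Proof.
case: n' / e => dP; apply: defp_ext dP => x.
by have -> : (fun i => x (cast_ord erefl i)) = x by apply: funext => i; rewrite cast_ord_id.
Qed.

Lemma vcat_vsnoc k m (y : pt G k) (z : pt G m) a :
  (fun i => vsnoc (vcat y z) a (cast_ord (addnS k m) i)) = vcat y (vsnoc z a).
Proof.
apply: funext => i; have lt_ikm := ltn_ord i; case: (ltnP i k) => [lt_ik|le_ki].
  have lt_i : (i < k + m)%N by lia.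
  by rewrite (vsnoc_nth (Ordinal lt_i)) // !(vcat_nth_l (Ordinal lt_ik)).
have lt_i : (i - k < m.+1)%N by lia.
rewrite [RHS](vcat_nth_r (Ordinal lt_i)) /=; last by lia.
case: (ltnP (i - k) m) => [lt_im|le_mi]; last by rewrite !vsnoc_nth_max //=; lia.
have lt_ikm' : (i < k + m)%N by lia.
rewrite (vsnoc_nth (Ordinal lt_ikm')) // (vsnoc_nth (Ordinal lt_im)) //.
by rewrite (vcat_nth_r (Ordinal lt_im)) //=; lia.
Qed.

Lemma defp_exists_vcat k m (Q : pt G (k + m) -> Prop) :
  defp Q -> defp (fun y : pt G k => exists z : pt G m, Q (vcat y z)).
Proof.
elim: m Q => [|m ih] Q dQ.
  apply: defp_ext (defp_cast (addn0 k) dQ) => y.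
  have vcat0 (z : pt G 0) : vcat y z = (fun i => y (cast_ord (addn0 k) i)).
    by apply: funext => i; rewrite /vcat; case: splitP => [j ej|[]//]; congr y; apply: val_inj.
  by split => [Qy|[z]]; [exists (fun=> 0); rewrite vcat0 | rewrite vcat0].
apply: defp_ext (ih _ (defp_exists_last (defp_cast (addnS k m) dQ))) => y.
split => [[z [a]]|[z Qz]]; first by rewrite vcat_vsnoc; exists (vsnoc z a).
by exists (fun i => z (lift ord_max i)), (z ord_max); rewrite vcat_vsnoc -vsnoc_eta.
Qed.

Lemma defp_forall (I : finType) n (P : I -> pt G n -> Prop) :
  (forall i, defp (P i)) -> defp (fun x => forall i, P i x).
Proof.
move=> dP; suff /(_ (enum I)) : forall s : seq I, defp (fun x => forall i, i \in s -> P i x).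
  by apply: defp_ext => x; split => Px i; [apply: Px; rewrite mem_enum | move=> _; apply: Px].
elim => [|a s ih]; first by apply: defp_ext (@defpT n) => x; split => // _ i.
apply: defp_ext (defpI (dP a) ih) => x; split.
  by move=> [Pa Ps] i; rewrite inE => /predU1P [->|/Ps].
by move=> Px; split => [|i si]; apply: Px; rewrite inE ?eqxx ?si ?orbT.
Qed.

Lemma defp_reindex n k (s : 'I_n -> 'I_k) (P : pt G n -> Prop) :
  defp P -> defp (fun y : pt G k => P (fun i => y (s i))).
Proof.
move=> dP.
have dQ : defp (fun u : pt G (k + n) => P (fun i => u (rshift k i)) /\
   forall i, u (lshift n (s i)) = u (rshift k i)).
  by apply: defpI; [exact: defp_drop | apply: defp_forall => i; apply: defp_eq].
apply: defp_ext (defp_exists_vcat dQ) => y; split.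
  move=> [z []]; under eq_fun do rewrite vcat_rshift.
  move=> Pz ez; rewrite (_ : (fun i => _) = z) //.
  by apply: funext => i; have := ez i; rewrite vcat_lshift vcat_rshift.
move=> Py; exists (fun i => y (s i)); split => [|i]; last by rewrite vcat_lshift vcat_rshift.
by under eq_fun do rewrite vcat_rshift.
Qed.

End DefinablePredicates.

Section Formulas.
Variables (G : zmodType) (le : G -> G -> Prop) (S : ominimal_expansion le).
Local Notation defp := (defp S).

Inductive formula : Type :=
| FAtom n (A : pt G n -> Prop) of defp A & ('I_n -> nat)
| FNot of formula
| FAnd of formula & formula
| FImp of formula & formula
| FExists of nat & formula
| FForall of nat & formula.

Definition upd (e : nat -> G) k a j := if j == k then a else e j.

Fixpoint holds (e : nat -> G) (f : formula) : Prop :=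
  match f with
  | FAtom _ A _ v => A (fun i => e (v i))
  | FNot f => ~ holds e f
  | FAnd f g => holds e f /\ holds e g
  | FImp f g => holds e f -> holds e g
  | FExists k f => exists a, holds (upd e k a) f
  | FForall k f => forall a, holds (upd e k a) f
  end.

Definition env_snoc n (r : nat -> 'I_n) k j : 'I_n.+1 :=
  if j == k then ord_max else lift ord_max (r j).

Lemma holds_snoc n (r : nat -> 'I_n) k (y : pt G n) a :
  (fun j => vsnoc y a (env_snoc r k j)) = upd (fun j => y (r j)) k a.
Proof.
by apply: funext => j; rewrite /env_snoc /upd; case: eqP; rewrite ?vsnoc_max ?vsnoc_lift.
Qed.

Lemma defp_holds f n (r : nat -> 'I_n) : defp (fun x => holds (fun j => x (r j)) f).
Proof.
elim: f n r => [n A dA v|f ih|f ih g ih'|f ih g ih'|k f ih|k f ih] m r /=.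
- exact: (defp_reindex (fun i => r (v i)) dA).
- exact: defpN.
- exact: defpI.
- exact: defp_imp.
- apply: defp_ext (defp_exists_last (ih _ (env_snoc r k))) => y.
  by under eq_exists do rewrite holds_snoc.
- apply: defp_ext (defpN (defp_exists_last (defpN (ih _ (env_snoc r k))))) => y.
  under eq_exists do rewrite holds_snoc.
  by split => [nex a|all [a]]; [apply: contrapT => ?; apply: nex; exists a | apply].
Qed.

Definition def1 (P : G -> Prop) := defp (fun w : pt G 1 => P (w ord0)).
Definition def2 (R : G -> G -> Prop) := defp (fun w : pt G 2 => R (w ord0) (w ord_max)).

(* The free variables of a formula defining a subset of G or G^2 are 0 and 1; the
   formulas below bind variables numbered from 5 on, so that they never capture them. *)
Lemma def1_holds (P : G -> Prop) f : (forall t, holds (fun=> t) f <-> P t) -> def1 P.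
Proof. by move=> fP; apply: defp_ext (defp_holds f (fun=> ord0)) => x; apply: fP. Qed.

Lemma def2_holds (R : G -> G -> Prop) f :
  (forall t u, holds (fun j => if j == 0%N then t else u) f <-> R t u) -> def2 R.
Proof.
move=> fR; apply: defp_ext (defp_holds f (fun j => if j == 0%N then ord0 else ord_max)) => x.
by rewrite -fR; under eq_fun do rewrite fun_if.
Qed.

Lemma def1_eq (c : G) : def1 (eq^~ c).
Proof.
apply: defp_ext (def_point S c) => x /=; split => [-> //|xc].
by rewrite (pt1_eta x) xc.
Qed.

Lemma defp_vcons n (P : pt G n.+1 -> Prop) a :
  defp P -> defp (fun x : pt G n => P (vcons a x)).
Proof.
move=> dP; pose s (i : 'I_n.+1) := if unlift ord0 i is Some j then lift ord_max j else ord_max.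
have dPa : defp (fun u : pt G n.+1 => u ord_max = a /\ P (fun i => u (s i))).
  exact: defpI (defp_reindex (fun=> ord_max) (def1_eq a)) (defp_reindex s dP).
apply: defp_ext (defp_exists_last dPa) => x.
have vsnoc_s c : (fun i => vsnoc x c (s i)) = vcons c x.
  apply: funext => i; rewrite /s /vcons.
  by case: (unlift ord0 i) => [j|]; rewrite ?vsnoc_lift ?vsnoc_max.
split => [[c []]|Pa]; first by rewrite vsnoc_max vsnoc_s => ->.
by exists a; rewrite vsnoc_max vsnoc_s.
Qed.

Lemma def2_lt : def2 (ltG le).
Proof.
apply: defp_ext (def_lt S) => x /=; split; last by exists (x ord0), (x ord_max); rewrite -pt2_eta.
by move=> [a [b [-> ab]]]; rewrite pt2_ord0 pt2_ord_max.
Qed.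

Lemma def3_add : defp (fun x : pt G 3 => x ord0 + x (lift ord0 ord0) = x ord_max).
Proof.
have -> : ord_max = lift ord0 (lift ord0 ord0) :> 'I_3 by apply: val_inj.
apply: defp_ext (def_add S) => x /=; split.
  by move=> [a [b ->]]; rewrite /pt3 /pt2 vcons0 !vcons_lift vcons0.
move=> xadd; exists (x ord0), (x (lift ord0 ord0)); rewrite xadd.
apply: funext => i; rewrite /pt3 /pt2 /pt1.
case: (unliftP ord0 i) => [j ->|->]; last by rewrite vcons0.
rewrite vcons_lift; case: (unliftP ord0 j) => [k ->|->]; last by rewrite vcons0.
by rewrite vcons_lift ord1.
Qed.

Definition atom1 P (dP : def1 P) i := FAtom dP (fun=> i).
Definition atom2 R (dR : def2 R) i j := FAtom dR (nth 0%N [:: i; j]).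
Definition FConst i c := atom1 (def1_eq c) i.
Definition FLt := atom2 def2_lt.
Definition FAdd i j k := FAtom def3_add (nth 0%N [:: i; j; k]).

Lemma def2_section1 R (dR : def2 R) c : def1 (R c).
Proof.
apply: (@def1_holds _ (FExists 5 (FAnd (FConst 5 c) (atom2 dR 5 0)))) => t /=.
by split => [[a []]|]; [rewrite /upd /= => -> | exists c].
Qed.

Lemma def2_section2 R (dR : def2 R) c : def1 (R^~ c).
Proof.
apply: (@def1_holds _ (FExists 5 (FAnd (FConst 5 c) (atom2 dR 0 5)))) => t /=.
by split => [[a []]|]; [rewrite /upd /= => -> | exists c].
Qed.

End Formulas.

Section OrderedGroup.
Variables (G : zmodType) (le : G -> G -> Prop) (Hle : oag_order le).
Local Notation lt := (ltG le).

Lemma leG_refl x : le x x. Proof. exact: oag_refl Hle x. Qed.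
Lemma leG_trans x y z : le x y -> le y z -> le x z. Proof. exact: oag_trans. Qed.
Lemma ltGW x y : lt x y -> le x y. Proof. by case. Qed.
Lemma ltG_irr x : ~ lt x x. Proof. by case. Qed.

Lemma not_ltG x y : ~ lt x y <-> le y x.
Proof.
split => [nxy|yx [xy /eqP]]; last by rewrite (oag_antisym Hle xy yx) eqxx.
case: (oag_total Hle x y) => // xy; case: (pselect (x = y)) => [->|/eqP nxy'].
  exact: leG_refl.
by case: nxy; split => //; apply/eqP.
Qed.

Lemma not_leG x y : ~ le x y <-> lt y x.
Proof.
split => [nxy|yx xy]; first by apply: contrapT => /not_ltG.
by move/not_ltG: xy; apply.
Qed.

Lemma leG_ltG_trans x y z : le x y -> lt y z -> lt x z.
Proof.
move=> xy [yz nyz]; split; first exact: leG_trans xy yz.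
by move=> exz; subst; apply: nyz; apply: (oag_antisym Hle).
Qed.

Lemma ltG_leG_trans x y z : lt x y -> le y z -> lt x z.
Proof.
move=> [xy nxy] yz; split; first exact: leG_trans xy yz.
by move=> exz; subst; apply: nxy; apply: (oag_antisym Hle).
Qed.

Lemma ltG_trans x y z : lt x y -> lt y z -> lt x z.
Proof. by move=> xy /ltGW; apply: ltG_leG_trans. Qed.

Lemma leG_add2r z x y : le x y -> le (x + z) (y + z). Proof. exact: oag_add. Qed.

Lemma ltG_add2r z x y : lt x y -> lt (x + z) (y + z).
Proof. by move=> [xy nxy]; split; [apply: leG_add2r | move=> /addIr]. Qed.

Lemma ltG_add2l z x y : lt x y -> lt (z + x) (z + y).
Proof. by rewrite ![z + _]addrC; apply: ltG_add2r. Qed.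

Lemma leG_opp x y : le x y -> le (- y) (- x).
Proof. by move=> /(leG_add2r (- x - y)); rewrite addrA subrr add0r addrCA subrr addr0. Qed.

Lemma ltG_addr x d : lt 0 d -> lt x (x + d).
Proof. by move=> /(ltG_add2l x); rewrite addr0. Qed.

Lemma ltG_subr x d : lt 0 d -> lt (x - d) x.
Proof. by move=> /(ltG_add2l (x - d)); rewrite addr0 subrK. Qed.

Lemma subr_ltG0 x y : lt x y -> lt 0 (y - x).
Proof. by move=> /(ltG_add2r (- x)); rewrite subrr. Qed.

Lemma exists_maxG x y : exists z, le x z /\ le y z /\ (z = x \/ z = y).
Proof.
by case: (oag_total Hle x y) => xy; [exists y | exists x]; do !split; auto; apply: leG_refl.
Qed.

Lemma exists_minG x y : exists z, le z x /\ le z y /\ (z = x \/ z = y).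
Proof.
by case: (oag_total Hle x y) => xy; [exists x | exists y]; do !split; auto; apply: leG_refl.
Qed.

Lemma exists_ubG (s : seq G) : exists B, forall x, x \in s -> le x B.
Proof.
elim: s => [|a s [B ubB]]; first by exists 0.
have [z [az [Bz _]]] := exists_maxG a B.
by exists z => x; rewrite inE => /predU1P [->|/ubB xB] //; apply: leG_trans xB Bz.
Qed.

Lemma exists_ubG_fin (I : finType) (P : I -> G -> Prop) :
  (forall i B B', P i B -> le B B' -> P i B') -> (forall i, exists B, P i B) ->
  exists B, forall i, P i B.
Proof.
move=> Pmono Pex; have [B ubB] := exists_ubG [seq xget 0 (P i) | i <- enum I].
exists B => i; apply: Pmono (xgetPex 0 (Pex i)) (ubB _ _).
by apply/mapP; exists i; rewrite ?mem_enum.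
Qed.

End OrderedGroup.

Section OMinimality.
Variables (G : zmodType) (le : G -> G -> Prop) (Hle : oag_order le) (S : ominimal_expansion le).
Local Notation lt := (ltG le).
Local Notation def1 := (def1 S).

Definition in_interval (iv : option G * option G) t :=
  (if iv.1 is Some a then lt a t else True) /\ (if iv.2 is Some b then lt t b else True).

Lemma def1_decomp P : def1 P -> exists (ps : seq G) (ivs : seq (option G * option G)), forall t,
  P t <-> t \in ps \/ exists2 iv, iv \in ivs & in_interval iv t.
Proof.
move=> /ominimal [ps [ivs eP]]; exists ps, ivs => t.
have /= -> := congr1 (fun A => A (pt1 t)) eP.
have iv_match iv : in_interval iv t <-> match iv with
    | (Some a, Some b) => open_interval le a b (pt1 t)
    | (Some a, None) => open_ray_right le a (pt1 t)
    | (None, Some b) => open_ray_left le b (pt1 t)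
    | (None, None) => True end.
  rewrite /in_interval /open_interval /open_ray_right /open_ray_left.
  by case: iv => [[a|] [b|]] /=; tauto.
by split=> -[|[iv ivs_iv /iv_match]]; auto; right; exists iv.
Qed.

Lemma def1_ind (Phi : (G -> Prop) -> Prop) :
  (forall P Q, (forall t, P t <-> Q t) -> Phi P -> Phi Q) ->
  Phi (fun=> False) -> (forall p, Phi (eq^~ p)) -> (forall iv, Phi (in_interval iv)) ->
  (forall P Q, Phi P -> Phi Q -> Phi (fun t => P t \/ Q t)) ->
  forall P, def1 P -> Phi P.
Proof.
move=> Phi_ext Phi0 Phi1 Phi_iv PhiU P /def1_decomp [ps [ivs eP]].
apply: (Phi_ext _ _ (fun t => iff_sym (eP t))); apply: (PhiU); clear eP.
  elim: ps => [|p ps ih]; first by apply: Phi_ext Phi0 => t; rewrite in_nil.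
  apply: Phi_ext (PhiU _ _ (Phi1 p) ih) => t.
  by rewrite inE; split => [[->|->]|/predU1P]; rewrite ?eqxx ?orbT.
elim: ivs => [|iv ivs ih]; first by apply: Phi_ext Phi0 => t; split => // -[].
apply: Phi_ext (PhiU _ _ (Phi_iv iv) ih) => t; split.
  case=> [ivt|[iv' ivs_iv' iv't]]; first by exists iv; rewrite ?mem_head.
  by exists iv'; rewrite ?inE ?ivs_iv' ?orbT.
by case=> iv'; rewrite inE => /predU1P [->|]; [left | right; exists iv'].
Qed.

Definition unbounded_above (P : G -> Prop) := forall B, exists2 t, P t & lt B t.

Lemma bounded_of_not_unbounded P : ~ unbounded_above P -> exists B, forall t, P t -> le t B.
Proof.
move=> nubP; apply: contrapT => nbP; apply: nubP => B; apply: contrapT => nBt.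
by apply: nbP; exists B => t Pt; apply/(not_ltG Hle) => Bt; apply: nBt; exists t.
Qed.

Lemma unbounded_aboveU P Q : unbounded_above (fun t => P t \/ Q t) ->
  unbounded_above P \/ unbounded_above Q.
Proof.
move=> ubPQ; apply: contrapT => /not_orP [/bounded_of_not_unbounded [B1 ubP]].
move=> /bounded_of_not_unbounded [B2 ubQ]; have [B [B1B [B2B _]]] := exists_maxG Hle B1 B2.
have [t [/ubP tB|/ubQ tB] Bt] := ubPQ B.
  exact: ltG_irr (leG_ltG_trans Hle (leG_trans Hle tB B1B) Bt).
exact: ltG_irr (leG_ltG_trans Hle (leG_trans Hle tB B2B) Bt).
Qed.

Definition contains_ray (P : G -> Prop) := exists c, forall t, lt c t -> P t.

Lemma def1_contains_ray P : def1 P -> unbounded_above P -> contains_ray P.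
Proof.
move: P; apply: def1_ind.
- move=> P Q PQ ih /(_ _) ubQ; have [|c cP] := ih.
    by move=> B; have [t /PQ] := ubQ B; exists t.
  by exists c => t /cP /PQ.
- by move=> /(_ 0) [].
- by move=> p /(_ p) [t -> /ltG_irr].
- case=> a [b|] /= ubiv; last first.
    by exists (if a is Some a then a else 0) => t ct; split => //; case: (a) ct.
  have [t [_ tb] bt] := ubiv b; case: (ltG_irr (ltG_trans Hle tb bt)).
- move=> P Q ihP ihQ /unbounded_aboveU [/ihP|/ihQ] [c cPQ]; exists c => t /cPQ; auto.
Qed.

(* If nothing lay between a and a + e, then e could not be halved; but the definable set
   of doubles is unbounded above, so it contains a ray, and e = (c + 2e)/2 - (c + e)/2. *)
Lemma ltG_dense a b : lt a b -> exists z, lt a z /\ lt z b.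
Proof.
move=> ab; apply: contrapT => nab.
have nmid d : lt 0 d -> ~ lt d (b - a).
  move=> d_gt0 dba; apply: nab; exists (a + d); split; first exact: (ltG_addr Hle a d_gt0).
  by have := ltG_add2l Hle a dba; rewrite addrCA subrr addr0.
move: (b - a) (subr_ltG0 Hle ab) nmid => e e_gt0 nmid.
have [c cdouble] : contains_ray (fun t => exists y, y + y = t).
  apply: def1_contains_ray.
    apply: (@def1_holds _ _ S _ (FExists 5 (FAdd S 5 5 0))) => t /=.
    by split => -[y yy]; exists y.
  move=> B; have [w [Bw [ew _]]] := exists_maxG Hle B e.
  have w_gt0 : lt 0 w := ltG_leG_trans Hle e_gt0 ew.
  by exists (w + w); [exists w | apply: (leG_ltG_trans Hle Bw (ltG_addr Hle _ w_gt0))].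
have [y yy] := cdouble (c + e) (ltG_addr Hle _ e_gt0).
have [z zz] := cdouble (c + e + e) (ltG_trans Hle (ltG_addr Hle _ e_gt0) (ltG_addr Hle _ e_gt0)).
have e_double : e = (z - y) + (z - y) by rewrite addrACA -opprD zz yy addrAC subrr add0r.
case: (pselect (lt 0 (z - y))) => [d_gt0|/(not_ltG Hle) d_le0].
  have /(leG_add2r Hle (z - y)) := proj1 (not_ltG Hle _ _) (nmid _ d_gt0).
  by rewrite -e_double => /(ltG_leG_trans Hle (ltG_addr Hle _ d_gt0)) /ltG_irr.
have /(leG_add2r Hle (z - y)) := d_le0; rewrite -e_double add0r => /(leG_trans Hle)/(_ d_le0).
by move/(ltG_leG_trans Hle e_gt0)/ltG_irr.
Qed.

End OMinimality.

Section Extrema.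
Variables (G : zmodType) (le : G -> G -> Prop) (Hle : oag_order le) (S : ominimal_expansion le).
Local Notation lt := (ltG le).
Local Notation def1 := (def1 S).
Local Notation in_interval := (in_interval le).
Variables (e0 : G) (e0_gt0 : lt 0 e0).

Definition right_decided (P : G -> Prop) a := exists2 u, lt a u &
  (forall z, lt a z -> lt z u -> P z) \/ (forall z, lt a z -> lt z u -> ~ P z).

Lemma right_decided_interval iv a : right_decided (in_interval iv) a.
Proof.
case: iv => l r.
case: (pselect (exists2 b, r = Some b & le b a)) => [[b -> ba]|nra].
  exists (a + e0); first exact: (ltG_addr Hle a e0_gt0).
  by right=> z az _ [_ /= zb]; apply: ltG_irr (ltG_trans Hle zb (leG_ltG_trans Hle ba az)).
case: (pselect (exists2 c, l = Some c & lt a c)) => [[c -> ac]|nla].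
  by exists c => //; right=> z _ zc [/= cz _]; apply: ltG_irr (ltG_trans Hle zc cz).
exists (if r is Some b then b else a + e0).
  case: r nra => [b nra|_]; last exact: (ltG_addr Hle a e0_gt0).
  by apply/(not_leG Hle) => ba; apply: nra; exists b.
left=> z az zr; split; last by case: (r) zr.
case: l nla => // c nla; apply: (leG_ltG_trans Hle _ az).
by apply/(not_ltG Hle) => ac; apply: nla; exists c.
Qed.

Lemma def1_right_decided P a : def1 P -> right_decided P a.
Proof.
move: P; apply: def1_ind.
- move=> P Q PQ [u au [Pu|nPu]]; exists u => //; [left|right] => z az zu.
    by apply/PQ; apply: Pu.
  by move=> /PQ; apply: nPu.
- by exists (a + e0); [exact: (ltG_addr Hle a e0_gt0) | right=> z _ _ []].
- move=> p; case: (pselect (lt a p)) => [ap|nap].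
    by exists p => //; right=> z _ zp zpe; subst; apply: ltG_irr zp.
  by exists (a + e0); [exact: (ltG_addr Hle a e0_gt0) | right=> z az _ zp; subst].
- by move=> iv; apply: right_decided_interval.
- move=> P Q [u1 au1 [Pu1|nPu1]].
    by move=> _; exists u1 => //; left=> z az zu; left; apply: Pu1.
  move=> [u2 au2 [Qu2|nQu2]].
    by exists u2 => //; left=> z az zu; right; apply: Qu2.
  have [u [uu1 [uu2 eu]]] := exists_minG Hle u1 u2.
  exists u; first by case: eu => ->.
  right=> z az zu [].
    exact: nPu1 az (ltG_leG_trans Hle zu uu1).
  exact: nQu2 az (ltG_leG_trans Hle zu uu2).
Qed.

Definition is_inf (P : G -> Prop) a :=
  (forall t, P t -> le a t) /\ (forall l, (forall t, P t -> le l t) -> le l a).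

Definition has_inf (P : G -> Prop) := (exists t, P t) ->
  (exists l, forall t, P t -> le l t) -> exists a, is_inf P a.

Lemma is_inf_unique P a a' : is_inf P a -> is_inf P a' -> a = a'.
Proof.
by move=> [lba glba] [lba' glba']; apply: (oag_antisym Hle); [apply: glba' | apply: glba].
Qed.

Lemma has_infU P Q : has_inf P -> has_inf Q -> has_inf (fun t => P t \/ Q t).
Proof.
move=> infP infQ [t PQt] [l lbPQ].
have lbP : exists l, forall t, P t -> le l t by exists l => s Ps; apply: lbPQ; left.
have lbQ : exists l, forall t, Q t -> le l t by exists l => s Qs; apply: lbPQ; right.
case: (pselect (exists t, P t)) => [/infP/(_ lbP) [a [lba glba]]|nP];
  case: (pselect (exists t, Q t)) => [/infQ/(_ lbQ) [b [lbb glbb]]|nQ].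
- have [m [ma [mb em]]] := exists_minG Hle a b; exists m; split.
    by move=> s [/lba|/lbb]; apply: (leG_trans Hle _); [exact: ma | exact: mb].
  move=> l' lbl'; case: em => ->; [apply: glba | apply: glbb] => s Ps; apply: lbl'; auto.
- exists a; split; last by move=> l' lbl'; apply: glba => s Ps; apply: lbl'; left.
  by move=> s [/lba //|Qs]; case: nQ; exists s.
- exists b; split; last by move=> l' lbl'; apply: glbb => s Qs; apply: lbl'; right.
  by move=> s [Ps|/lbb //]; case: nP; exists s.
- by case: PQt => [Pt|Qt]; [case: nP | case: nQ]; exists t.
Qed.

Lemma has_inf_interval iv : has_inf (in_interval iv).
Proof.
case: iv => [[c|] r] [t ivt] [l lbl]; last first.
  have ivl : in_interval (None, r) (l - e0).
    split => //; case: r ivt lbl => [b [_ /= tb]|] // lbl.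
    apply: (ltG_leG_trans Hle (ltG_subr Hle l e0_gt0) _).
    by apply: (leG_trans Hle (lbl t _) (ltGW tb)); split => //.
  by case: (ltG_irr (ltG_leG_trans Hle (ltG_subr Hle l e0_gt0) (lbl _ ivl))).
exists c; split => [s [cs _]|l' lbl']; first exact: ltGW.
apply/(not_ltG Hle) => cl'; have [m [ml' [mt em]]] := exists_minG Hle l' t.
have cm : lt c m by case: em => ->; [|case: ivt].
have [z [cz zm]] := ltG_dense Hle S cm.
have ivz : in_interval (Some c, r) z.
  split => //; case: r ivt {lbl} lbl' => [b [_ /= tb] _|//].
  exact: (ltG_trans Hle (ltG_leG_trans Hle zm mt) tb).
exact: ltG_irr (ltG_leG_trans Hle (ltG_leG_trans Hle zm ml') (lbl' _ ivz)).
Qed.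

Lemma def1_has_inf P : def1 P -> has_inf P.
Proof.
move: P; apply: def1_ind.
- move=> P Q PQ infP [t /PQ Pt] [l lbl].
  have lbP : exists l, forall s, P s -> le l s by exists l => s /PQ; apply: lbl.
  have [a [lba glba]] := infP (ex_intro _ t Pt) lbP.
  by exists a; split => [s /PQ|l' lbl']; [apply: lba | apply: glba => s /PQ; apply: lbl'].
- by move=> [].
- move=> p _ _; exists p; split => [t ->|l lbl]; [exact: (leG_refl Hle) | exact: lbl].
- by move=> iv; apply: has_inf_interval.
- exact: has_infU.
Qed.

Lemma is_inf_not_attained P a : def1 P -> is_inf P a -> ~ P a ->
  exists2 u, lt a u & forall z, lt a z -> lt z u -> P z.
Proof.
move=> dP [lba glba] nPa; have [u au [|nP]] := def1_right_decided a dP; first by exists u.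
case: (ltG_irr (ltG_leG_trans Hle au (glba _ _))) => t Pt.
apply/(not_ltG Hle) => tu; have at' : lt a t by split; [apply: lba | move=> eat; subst].
exact: nP t at' tu Pt.
Qed.

Definition is_sup (P : G -> Prop) s :=
  (forall t, P t -> le t s) /\ (forall l, (forall t, P t -> le t l) -> le s l).

Lemma is_sup_unique P s s' : is_sup P s -> is_sup P s' -> s = s'.
Proof.
by move=> [ubs lubs] [ubs' lubs']; apply: (oag_antisym Hle); [apply: lubs | apply: lubs'].
Qed.

Lemma def1_opp P : def1 P -> def1 (fun t => P (- t)).
Proof.
move=> dP; apply: (@def1_holds _ _ S _
  (FExists 5 (FExists 6 (FAnd (FConst S 6 0) (FAnd (FAdd S 0 5 6) (atom1 dP 5)))))).
move=> t /=; rewrite /upd /=; split => [[u [z [-> [tu0 Pu]]]]|Pt].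
  by move: Pu; rewrite -[u](addKr t) tu0 addr0.
by exists (- t), 0; rewrite subrr.
Qed.

Lemma def1_has_sup P : def1 P -> (exists t, P t) -> (exists B, forall t, P t -> le t B) ->
  exists s, is_sup P s.
Proof.
move=> dP [t Pt] [B ubB].
have lbB : exists l, forall u, P (- u) -> le l u.
  by exists (- B) => u Pu; rewrite -[u]opprK; apply: (leG_opp Hle (ubB _ _)).
have Pnt : exists u, P (- u) by exists (- t); rewrite opprK.
have [a [lba glba]] := def1_has_inf (def1_opp dP) Pnt lbB.
exists (- a); split => [u Pu|l ubl].
  by rewrite -[u]opprK; apply: (leG_opp Hle); apply: lba; rewrite opprK.
rewrite -[l]opprK; apply: (leG_opp Hle).
by apply: glba => u Pu; rewrite -[u]opprK; apply: (leG_opp Hle (ubl _ _)).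
Qed.

End Extrema.

Section BoundedCopyOfRay.
Variables (G : zmodType) (le : G -> G -> Prop) (Hle : oag_order le) (S : ominimal_expansion le).
Local Notation lt := (ltG le).
Local Notation def2 := (def2 S).

Definition bounded_copy_of_ray := exists D : set (pt G 1),
  definable S D /\ bounded_set le D /\
  exists g, definable_bijection S (open_ray_right le 0) D g.

Variables (Q : G -> G -> Prop) (dQ : def2 Q) (c : G).
Hypothesis Q_total : forall t, lt c t -> exists a, Q t a.
Hypothesis Q_fun : forall t a a', Q t a -> Q t a' -> a = a'.
Hypothesis Q_inj : forall t s a, lt c t -> lt c s -> Q t a -> Q s a -> t = s.

Let image_Q := [set y : pt G 1 | exists2 t, lt c t & Q t (y ord0)].

Lemma ray_bijection_of_injective_graph :
  definable_bijection S (open_ray_right le 0) image_Q (fun x => pt1 (xget 0 (Q (x ord0 + c)))).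
Proof.
have Qh t : lt c t -> Q t (xget 0 (Q t)) := fun ct => xgetPex 0 (Q_total ct).
have shift x : lt 0 x -> lt c (x + c) by move=> /(ltG_add2r Hle c); rewrite add0r.
split; [|split].
- have dgraph : def2 (fun s u => lt 0 s /\ Q (s + c) u).
    apply: (@def2_holds _ _ S _ (FAnd (FExists 5 (FAnd (FConst S 5 0) (FLt S 5 0)))
      (FExists 6 (FExists 7 (FAnd (FConst S 6 c) (FAnd (FAdd S 0 6 7) (atom2 dQ 7 1))))))).
    move=> s u /=; rewrite /upd /=; split.
      by move=> [[_ [-> s_gt0]] [_ [_ [-> [<- Q_u]]]]].
    by move=> [s_gt0 Q_u]; split; [exists 0 | exists c, (s + c)].
  apply: defp_ext dgraph => w; split => [[s_gt0 Q_u]|[x x_gt0 ->]].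
    exists (pt1 (w ord0)) => //; rewrite vcat_pt1 /=.
    by rewrite -(Q_fun Q_u (Qh _ (shift _ s_gt0))) -pt2_eta.
  rewrite [x]pt1_eta vcat_pt1 pt2_ord0 pt2_ord_max; split => //.
  exact: Qh (shift _ x_gt0).
- move=> x y; rewrite !in_setE /open_ray_right /= => x_gt0 y_gt0.
  move=> /(congr1 (fun p => p ord0)); rewrite /pt1 => hxy.
  have := Q_inj (shift _ x_gt0) (shift _ y_gt0) (Qh _ (shift _ x_gt0)).
  rewrite hxy => /(_ (Qh _ (shift _ y_gt0))) /addIr xy.
  by rewrite [x]pt1_eta [y]pt1_eta xy.
apply/seteqP; split => [y [x x_gt0 <-]|y [t ct Qty]] /=.
  by exists (x ord0 + c); [exact: shift | exact: Qh (shift _ x_gt0)].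
exists (pt1 (t - c)); first exact: (subr_ltG0 Hle ct).
by rewrite [RHS]pt1_eta /pt1 subrK (Q_fun Qty (Qh _ ct)).
Qed.

Lemma bounded_copy_of_injective_graph (b b' : G) :
  (forall t a, lt c t -> Q t a -> le b a /\ le a b') -> bounded_copy_of_ray.
Proof.
move=> Q_bnd; exists image_Q; split; [|split].
- apply: (@def1_holds _ _ S (fun a => exists2 t, lt c t & Q t a)
    (FExists 5 (FAnd (FExists 6 (FAnd (FConst S 6 c) (FLt S 6 5))) (atom2 dQ 5 0)))).
  move=> a /=; rewrite /upd /=; split => [[t [[_ [-> ct]] Qta]]|[t ct Qta]].
    by exists t.
  by exists t; split => //; exists c.
- by exists b, b' => y [t ct Qty] i; rewrite ord1; apply: Q_bnd Qty.
by eexists; apply: ray_bijection_of_injective_graph.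
Qed.

End BoundedCopyOfRay.

Section BoundedSurjection.
Variables (G : zmodType) (le : G -> G -> Prop) (Hle : oag_order le) (S : ominimal_expansion le).
Variables (e0 : G) (e0_gt0 : ltG le 0 e0).
Local Notation lt := (ltG le).
Local Notation def1 := (def1 S).
Local Notation def2 := (def2 S).

Lemma def2_is_inf (R : G -> G -> Prop) : def2 R -> def2 (fun t a => is_inf le (R^~ t) a).
Proof.
move=> dR; apply: (@def2_holds _ _ S _
  (FAnd (FForall 5 (FImp (atom2 dR 5 0) (FNot (FLt S 5 1))))
        (FForall 6 (FImp (FForall 7 (FImp (atom2 dR 7 0) (FNot (FLt S 7 6))))
                         (FNot (FLt S 1 6)))))).
move=> t a; rewrite /= /upd /=; split => [[lba glba]|[lba glba]]; split.
- by move=> z Rz; apply/(not_ltG Hle); apply: lba.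
- by move=> l lbl; apply/(not_ltG Hle); apply: glba => z Rz; apply/(not_ltG Hle); apply: lbl.
- by move=> z Rz; apply/(not_ltG Hle); apply: lba.
- by move=> l lbl; apply/(not_ltG Hle); apply: glba => z Rz; apply/(not_ltG Hle); apply: lbl.
Qed.

Lemma def2_is_sup (R : G -> G -> Prop) : def2 R -> def2 (fun y s => is_sup le (R y) s).
Proof.
move=> dR; apply: (@def2_holds _ _ S _
  (FAnd (FForall 5 (FImp (atom2 dR 0 5) (FNot (FLt S 1 5))))
        (FForall 6 (FImp (FForall 7 (FImp (atom2 dR 0 7) (FNot (FLt S 6 7))))
                         (FNot (FLt S 6 1)))))).
move=> y s; rewrite /= /upd /=; split => [[ubs lubs]|[ubs lubs]]; split.
- by move=> z Rz; apply/(not_ltG Hle); apply: ubs.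
- by move=> l ubl; apply/(not_ltG Hle); apply: lubs => z Rz; apply/(not_ltG Hle); apply: ubl.
- by move=> z Rz; apply/(not_ltG Hle); apply: ubs.
- by move=> l ubl; apply/(not_ltG Hle); apply: lubs => z Rz; apply/(not_ltG Hle); apply: ubl.
Qed.

Variables (R : G -> G -> Prop) (dR : def2 R).
Hypothesis R_fun : forall y t t', R y t -> R y t' -> t = t'.

Lemma inf_fibre_injective c : (forall t, lt c t -> exists y, R y t) ->
  exists2 c', le c c' & forall t s a, lt c' t -> lt c' s ->
    is_inf le (R^~ t) a -> is_inf le (R^~ s) a -> t = s.
Proof.
move=> R_onto; pose attained t := exists a, is_inf le (R^~ t) a /\ R a t.
have dattained : def1 attained.
  apply: (@def1_holds _ _ S _ (FExists 8 (FAnd (atom2 (def2_is_inf dR) 0 8) (atom2 dR 8 0)))).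
  by move=> t; rewrite /= /upd /=.
case: (pselect (unbounded_above le attained)) => [|/(bounded_of_not_unbounded Hle) [B attB]].
  move=> /(def1_contains_ray Hle dattained) [c1 c1att].
  have [c' [cc' [c1c' _]]] := exists_maxG Hle c c1; exists c' => // t s a c't c's inf_t inf_s.
  have [a1 [inf_t' Ra1]] := c1att t (leG_ltG_trans Hle c1c' c't).
  have [a2 [inf_s' Ra2]] := c1att s (leG_ltG_trans Hle c1c' c's).
  apply: (R_fun (y := a)).
    by rewrite (is_inf_unique Hle inf_t inf_t').
  by rewrite (is_inf_unique Hle inf_s inf_s').
have [c' [cc' [Bc' _]]] := exists_maxG Hle c B; exists c' => // t s a c't c's inf_t inf_s.
have fibre_nbhd r : lt c' r -> is_inf le (R^~ r) a ->
    exists2 u, lt a u & forall z, lt a z -> lt z u -> R z r.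
  move=> c'r inf_r; apply: (is_inf_not_attained Hle e0_gt0 (def2_section2 dR r) inf_r).
  move=> Rar; have := attB r (ex_intro _ a (conj inf_r Rar)).
  by move/(ltG_leG_trans Hle (leG_ltG_trans Hle Bc' c'r)) /ltG_irr.
have [u1 au1 Rt] := fibre_nbhd t c't inf_t; have [u2 au2 Rs] := fibre_nbhd s c's inf_s.
have [u [uu1 [uu2 eu]]] := exists_minG Hle u1 u2.
have [z [az zu]] : exists z, lt a z /\ lt z u by apply: (ltG_dense Hle S); case: eu => ->.
apply: (R_fun (y := z)); first exact: Rt az (ltG_leG_trans Hle zu uu1).
exact: Rs az (ltG_leG_trans Hle zu uu2).
Qed.

Lemma bounded_copy_of_surjection (b b' c : G) :
  (forall y t, R y t -> le b y /\ le y b') ->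
  (forall t, lt c t -> exists y, R y t) -> bounded_copy_of_ray S.
Proof.
move=> R_bnd R_onto; have [c' cc' inf_inj] := inf_fibre_injective R_onto.
have inf_total t : lt c' t -> exists a, is_inf le (R^~ t) a.
  move=> c't; apply: (def1_has_inf Hle e0_gt0 (def2_section2 dR t)).
    exact: R_onto (leG_ltG_trans Hle cc' c't).
  by exists b => y /R_bnd [].
have inf_fun t a a' : is_inf le (R^~ t) a -> is_inf le (R^~ t) a' -> a = a'.
  exact: is_inf_unique.
apply: (bounded_copy_of_injective_graph (b := b) (b' := b') Hle (def2_is_inf dR) inf_total
  inf_fun inf_inj).
move=> t a c't [lba glba]; split; first by apply: glba => y /R_bnd [].
have [y Ryt] := R_onto t (leG_ltG_trans Hle cc' c't).
exact: (leG_trans Hle (lba _ Ryt) (proj2 (R_bnd _ _ Ryt))).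
Qed.

End BoundedSurjection.

Section UnboundedGraph.
Variables (G : zmodType) (le : G -> G -> Prop) (Hle : oag_order le) (S : ominimal_expansion le).
Variables (e0 : G) (e0_gt0 : ltG le 0 e0).
Local Notation defp := (defp S).
Local Notation def2 := (def2 S).

Definition def_rel n (R : pt G n -> G -> Prop) :=
  defp (fun w : pt G n.+1 => R (fun j => w (lift ord_max j)) (w ord_max)).

Lemma def_rel_vcons n (R : pt G n.+1 -> G -> Prop) a :
  def_rel R -> def_rel (fun x t => R (vcons a x) t).
Proof.
by move=> /(defp_vcons a); apply: defp_ext => w; rewrite vcons_belast vcons_max.
Qed.

Lemma def_rel_fibre n (R : pt G n.+1 -> G -> Prop) :
  def_rel R -> def2 (fun y t => exists x, R (vcons y x) t).
Proof.
pose s (i : 'I_n.+2) : 'I_(2 + n) := if unlift ord_max i is Some i'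
  then (if unlift ord0 i' is Some j then rshift 2 j else lshift n ord0)
  else lshift n ord_max.
move=> /(defp_reindex s) /defp_exists_vcat; apply: defp_ext => w.
have s_belast x : (fun j : 'I_n.+1 => vcat w x (s (lift ord_max j))) = vcons (w ord0) x.
  apply: funext => j; rewrite /s liftK /vcons.
  by case: (unlift ord0 j) => [k|]; rewrite ?vcat_rshift ?vcat_lshift.
have s_max : s ord_max = lshift n ord_max by rewrite /s unlift_none.
by under eq_exists do rewrite s_belast s_max vcat_lshift; exact: iff_refl.
Qed.

Lemma bounded_copy_of_bounded_fibres (F : G -> G -> Prop) (b b' : G) : def2 F ->
  (forall y t, F y t -> le b y /\ le y b') ->
  (forall y, exists B, forall t, F y t -> le t B) ->
  unbounded_above le (fun t => exists y, F y t) -> bounded_copy_of_ray S.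
Proof.
move=> dF F_bnd F_ub F_unb.
pose sup_rel y u := (exists t, F y t) /\ is_sup le (F y) u.
have dsup : def2 sup_rel.
  apply: (@def2_holds _ _ S _ (FAnd (FExists 5 (atom2 dF 0 5)) (atom2 (def2_is_sup Hle dF) 0 1))).
  by move=> y u; rewrite /= /upd /=.
have [c c_sup] : contains_ray le (fun u => exists y, sup_rel y u).
  apply: (def1_contains_ray Hle).
    apply: (@def1_holds _ _ S _ (FExists 5 (atom2 dsup 5 0))).
    by move=> u; rewrite /= /upd /=.
  move=> B; have [t [y Fyt] Bt] := F_unb B.
  have [u sup_u] := def1_has_sup Hle e0_gt0 (def2_section1 dF y) (ex_intro _ t Fyt) (F_ub y).
  exists u; first by exists y; split; first exists t.
  exact: (ltG_leG_trans Hle Bt (proj1 sup_u t Fyt)).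
have sup_fun y u u' : sup_rel y u -> sup_rel y u' -> u = u'.
  by move=> [_ sup_u] [_ sup_u']; apply: (is_sup_unique Hle sup_u sup_u').
have sup_bnd y u : sup_rel y u -> le b y /\ le y b' by move=> [[t /F_bnd]].
exact: (bounded_copy_of_surjection Hle e0_gt0 dsup sup_fun sup_bnd c_sup).
Qed.

Lemma bounded_copy_of_unbounded_graph n (R : pt G n -> G -> Prop) (b b' : G) :
  def_rel R -> (forall x t t', R x t -> R x t' -> t = t') ->
  (forall x t, R x t -> forall i, le b (x i) /\ le (x i) b') ->
  unbounded_above le (fun t => exists x, R x t) -> bounded_copy_of_ray S.
Proof.
elim: n R => [|n ih] R dR R_fun R_bnd R_unb.
  have [t [x Rxt] _] := R_unb 0; have [t' [x' Rxt'] tt'] := R_unb t.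
  have xx' : x' = x by apply: funext => -[].
  rewrite xx' in Rxt'; rewrite (R_fun _ _ _ Rxt' Rxt) in tt'.
  by case: (ltG_irr tt').
pose fibre y t := exists x, R (vcons y x) t.
case: (pselect (exists y, unbounded_above le (fibre y))) => [[y fibre_unb]|bnd_fibres].
  apply: (ih _ (def_rel_vcons y dR) _ _ fibre_unb) => [x t t'|x t Rxt i].
    exact: R_fun.
  by have := R_bnd _ _ Rxt (lift ord0 i); rewrite vcons_lift.
apply: (bounded_copy_of_bounded_fibres (def_rel_fibre dR) (b := b) (b' := b')).
- by move=> y t [x /R_bnd /(_ ord0)]; rewrite vcons0.
- move=> y; apply: (bounded_of_not_unbounded Hle) => fibre_unb.
  by apply: bnd_fibres; exists y.
- move=> B; have [t [x Rxt] Bt] := R_unb B; exists t => //.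
  by exists (x ord0), (fun i => x (lift ord0 i)); rewrite -vcons_eta.
Qed.

End UnboundedGraph.

Section Coordinates.
Variables (G : zmodType) (le : G -> G -> Prop) (Hle : oag_order le) (S : ominimal_expansion le).

Lemma def2_signed (sg : bool) : def2 S (fun a t => t = if sg then a else - a).
Proof.
case: sg; first exact: (defp_eq S (ord_max : 'I_2) ord0).
apply: (@def2_holds _ _ S _ (FExists 5 (FAnd (FConst S 5 0) (FAdd S 0 1 5)))).
move=> a t; rewrite /= /upd /=; split => [[_ [-> at0]]|->].
  by rewrite -[t](addKr a) at0 addr0.
by exists 0; split; rewrite ?subrr.
Qed.

Lemma def_rel_coordinate_image m n (M : set (pt G m)) (f : pt G m -> pt G n)
    (i : 'I_m) (sg : bool) : definable S (graph_on M f) ->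
  def_rel S (fun y t => exists x, M x /\ f x = y /\ t = if sg then x i else - x i).
Proof.
move=> dgraph; pose s (k : 'I_(m + n)) : 'I_(n.+1 + m) :=
  match split k with inl j => rshift n.+1 j | inr j => lshift m (lift ord_max j) end.
pose r (k : 'I_2) : 'I_(n.+1 + m) := if k == ord0 then rshift n.+1 i else lshift m ord_max.
have := defp_exists_vcat (defpI (defp_reindex s dgraph) (defp_reindex r (def2_signed sg))).
apply: defp_ext => w; rewrite /r /=.
have s_vcat x : (fun k => vcat w x (s k)) = vcat x (fun j => w (lift ord_max j)).
  apply: funext => k; rewrite /s [RHS]/vcat.
  by case: (split k) => j; rewrite ?vcat_rshift ?vcat_lshift.
under eq_exists do rewrite s_vcat vcat_lshift vcat_rshift.
split => [[x [[x' Mx' /vcat_inj [-> fx']] ->]]|[x [Mx [fx ->]]]]; first by exists x'.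
by exists x; split => //; exists x => //; rewrite fx.
Qed.

Lemma unbounded_coordinate m (M : set (pt G m)) : ~ bounded_set le M ->
  exists i sg, unbounded_above le (fun t => exists2 x, M x & t = if sg then x i else - x i).
Proof.
move=> nbM; apply: contrapT => nub; apply: nbM.
have bnd (sg : bool) i : exists B, forall x, M x -> le (if sg then x i else - x i) B.
  have [ub|B ubB] := @bounded_of_not_unbounded _ _ Hle
    (fun t => exists2 x, M x & t = if sg then x i else - x i); first by apply: nub; exists i, sg.
  by exists B => x Mx; apply: ubB; exists x.
have mono (sg : bool) i B B' : (forall x, M x -> le (if sg then x i else - x i) B) -> le B B' ->
    forall x, M x -> le (if sg then x i else - x i) B'.
  by move=> ubB BB' x Mx; apply: (leG_trans Hle (ubB x Mx) BB').
have [B ub] := exists_ubG_fin Hle (mono true) (bnd true).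
have [B' lb] := exists_ubG_fin Hle (mono false) (bnd false).
exists (- B'), B => x Mx i; split; last exact: ub.
by rewrite -[x i]opprK; apply: (leG_opp Hle); apply: lb.
Qed.

End Coordinates.

Unset Implicit Arguments. Set Strict Implicit. Set Printing Implicit Defensive.

Theorem proposition3p5 (G : zmodType) (le : G -> G -> Prop)
  (Hle : oag_order le) (S : ominimal_expansion le)
  (m n : nat) (M : set (pt G m)) (N : set (pt G n)) :
  definable S M -> ~ bounded_set le M ->
  definable S N -> bounded_set le N ->
  (exists f : pt G m -> pt G n, definable_bijection S M N f) ->
  exists D : set (pt G 1),
    definable S D /\ bounded_set le D /\
    exists g : pt G 1 -> pt G 1,
      definable_bijection S (open_ray_right le 0) D g.
Proof.
move=> _ nbM _ [b [b' bN]] [f [dgraph [finj fM]]].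
have [i [sg unb]] := unbounded_coordinate Hle nbM.
have [e0 e0_gt0] : exists e0, ltG le 0 e0 by have [t _ t_gt0] := unb 0; exists t.
apply: (bounded_copy_of_unbounded_graph Hle e0_gt0 (def_rel_coordinate_image i sg dgraph)
  (b := b) (b' := b')).
- move=> y t t' [x [Mx [fx ->]]] [x' [Mx' [fx' ->]]].
  by rewrite (finj x x') ?in_setE // fx fx'.
- by move=> y t [x [Mx [<- _]]]; apply: bN; rewrite -fM; exists x.
- move=> B; have [_ [x Mx ->] Bt] := unb B.
  by exists (if sg then x i else - x i); first exists (f x), x.
Qed.
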